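(* Let $\mathcal{A}$ be an essentially small additive category admitting finite coproducts. Endow the split Grothendieck group $\mathrm{K}_0^\oplus(\mathcal{A})$ with the heap structure $[\overline{A},\overline{B},\overline{C}]_\oplus:=\overline{A}-\overline{B}+\overline{C}$. Then there is a canonical epimorphism of heaps $\mathrm{K}_0^\oplus(\mathcal{A})\twoheadrightarrow \mathrm{K}_0^{\mathrm{heap}}(\mathcal{A})$ sending the class of an object to the class of the same object.
   Context: A heap is a set $H$ with a ternary operation $[\_,\_,\_]:H^3\to H$ satisfying $[a,b,[c,d,e]]=[[a,b,c],d,e]$ and $[x,x,y]=y=[y,x,x]$. The split Grothendieck group $\mathrm{K}_0^\oplus(\mathcal{A})$ of an additive category is the abelian group generated by isomorphism classes $\overline{A}$ of objects subject to $\overline{A\oplus B}=\overline{A}+\overline{B}$. For an essentially small category $\mathcal{C}$, its Grothendieck heap $\mathrm{K}_0^{\mathrm{heap}}(\mathcal{C})$ is the heap generated by the isomorphism classes $\overline{X}$ of objects of $\mathcal{C}$, subject to the relations $[\overline{X},\overline{Y},\overline{Z}]=\overline{X\sqcup_Y Z}$ for every pushout square $X\leftarrow Y\rightarrow Z$ in $\mathcal{C}$ in which at least one of the two maps $Y\to X$, $Y\to Z$ is a monomorphism. *)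

From HB Require Import structures.
From mathcomp Require Import all_boot all_algebra.
From Stdlib Require Import ClassicalEpsilon.
Set Implicit Arguments.
Unset Strict Implicit.
Unset Printing Implicit Defensive.
Import GRing.Theory.
Local Open Scope ring_scope.

(** * Preadditive categories: Hom-sets are abelian groups, composition is
    bilinear.  Objects live in a [Type], so the category is (essentially)
    small relative to the ambient universe. *)
Record preadditive := PreAdd {
  Obj : Type;
  Hom : Obj -> Obj -> zmodType;
  idm : forall A, Hom A A;
  comp : forall A B C, Hom B C -> Hom A B -> Hom A C;
  comp_id_l : forall A B (f : Hom A B), comp (idm B) f = f;
  comp_id_r : forall A B (f : Hom A B), comp f (idm A) = f;
  comp_assoc : forall A B C D (f : Hom C D) (g : Hom B C) (h : Hom A B),
      comp f (comp g h) = comp (comp f g) h;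
  comp_addl : forall A B C (f g : Hom B C) (h : Hom A B),
      comp (f + g) h = comp f h + comp g h;
  comp_addr : forall A B C (h : Hom B C) (f g : Hom A B),
      comp h (f + g) = comp h f + comp h g
}.

Arguments idm {p} A.
Arguments comp {p A B C} _ _.

Section Cat.
Variable C : preadditive.

Definition is_zero_object (Z : Obj C) :=
  (forall A (f : Hom Z A), f = 0) /\ (forall A (g : Hom A Z), g = 0).

Definition is_biproduct (A B S : Obj C) :=
  exists (i1 : Hom A S) (i2 : Hom B S) (p1 : Hom S A) (p2 : Hom S B),
    [/\ comp p1 i1 = idm A, comp p2 i2 = idm B,
        comp p2 i1 = 0, comp p1 i2 = 0 &
        comp i1 p1 + comp i2 p2 = idm S].

(** Additive category: preadditive, with a zero object and all binary
    biproducts (hence all finite coproducts). *)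
Definition additive :=
  (exists Z, is_zero_object Z) /\ (forall A B, exists S, is_biproduct A B S).

Definition isomorphic (X Y : Obj C) :=
  exists (f : Hom X Y) (g : Hom Y X), comp g f = idm X /\ comp f g = idm Y.

Definition mono (X Y : Obj C) (f : Hom X Y) :=
  forall W (h k : Hom W X), comp f h = comp f k -> h = k.

Definition is_pushout (X Y Z P : Obj C) (f : Hom Y X) (g : Hom Y Z)
    (u : Hom X P) (v : Hom Z P) :=
  comp u f = comp v g /\
  forall Q (a : Hom X Q) (b : Hom Z Q), comp a f = comp b g ->
    exists h : Hom P Q, [/\ comp h u = a, comp h v = b &
      forall h' : Hom P Q, comp h' u = a -> comp h' v = b -> h' = h].

End Cat.

Definition quot (T : Type) (R : T -> T -> Prop) := {P : T -> Prop | exists x, P = R x}.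
Definition qcls (T : Type) (R : T -> T -> Prop) (x : T) : quot R :=
  exist _ (R x) (ex_intro _ x erefl).
Definition qrepr (T : Type) (R : T -> T -> Prop) (q : quot R) : T :=
  proj1_sig (constructive_indefinite_description _ (proj2_sig q)).

(** * Split Grothendieck group: free abelian group on objects modulo
    the congruence generated by [X ~ Y] for [X ≅ Y] and [A⊕B ~ A + B]. *)
Inductive gterm (C : preadditive) :=
  | gvar of Obj C | gzero | gadd of gterm C & gterm C | gneg of gterm C.
Arguments gzero {C}.

Inductive gcong (C : preadditive) : gterm C -> gterm C -> Prop :=
  | gc_refl x : gcong x x
  | gc_sym x y : gcong x y -> gcong y x
  | gc_trans x y z : gcong x y -> gcong y z -> gcong x z
  | gc_add x x' y y' : gcong x x' -> gcong y y' -> gcong (gadd x y) (gadd x' y')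
  | gc_neg x x' : gcong x x' -> gcong (gneg x) (gneg x')
  | gc_addA x y z : gcong (gadd x (gadd y z)) (gadd (gadd x y) z)
  | gc_addC x y : gcong (gadd x y) (gadd y x)
  | gc_add0 x : gcong (gadd gzero x) x
  | gc_addN x : gcong (gadd (gneg x) x) gzero
  | gc_iso X Y : isomorphic X Y -> gcong (gvar X) (gvar Y)
  | gc_biprod A B S : is_biproduct A B S ->
      gcong (gvar S) (gadd (gvar A) (gvar B)).

Definition K0sum (C : preadditive) := quot (@gcong C).
Definition clsS (C : preadditive) (X : Obj C) : K0sum C := qcls (@gcong C) (gvar X).
Definition sum_heap_op (C : preadditive) (a b c : K0sum C) : K0sum C :=
  qcls (@gcong C) (gadd (gadd (qrepr a) (gneg (qrepr b))) (qrepr c)).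

(** * Grothendieck heap: free heap on objects modulo the congruence generated
    by the heap axioms, [X ~ Y] for [X ≅ Y], and
    [[X,Y,Z] ~ X ⊔_Y Z] for pushouts with at least one leg a monomorphism. *)
Inductive hterm (C : preadditive) :=
  | hvar of Obj C | hop of hterm C & hterm C & hterm C.

Inductive hcong (C : preadditive) : hterm C -> hterm C -> Prop :=
  | hc_refl x : hcong x x
  | hc_sym x y : hcong x y -> hcong y x
  | hc_trans x y z : hcong x y -> hcong y z -> hcong x z
  | hc_op x x' y y' z z' : hcong x x' -> hcong y y' -> hcong z z' ->
      hcong (hop x y z) (hop x' y' z')
  | hc_assoc a b c d e : hcong (hop a b (hop c d e)) (hop (hop a b c) d e)
  | hc_cancl x y : hcong (hop x x y) y
  | hc_cancr x y : hcong (hop y x x) y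
  | hc_iso X Y : isomorphic X Y -> hcong (hvar X) (hvar Y)
  | hc_pushout X Y Z P (f : Hom Y X) (g : Hom Y Z) (u : Hom X P) (v : Hom Z P) :
      is_pushout f g u v -> (mono f \/ mono g) ->
      hcong (hop (hvar X) (hvar Y) (hvar Z)) (hvar P).

Definition K0heap (C : preadditive) := quot (@hcong C).
Definition clsH (C : preadditive) (X : Obj C) : K0heap C := qcls (@hcong C) (hvar X).
Definition heap_op (C : preadditive) (a b c : K0heap C) : K0heap C :=
  qcls (@hcong C) (hop (qrepr a) (qrepr b) (qrepr c)).

Definition heap_morphism (H1 H2 : Type) (o1 : H1 -> H1 -> H1 -> H1)
    (o2 : H2 -> H2 -> H2 -> H2) (f : H1 -> H2) :=
  forall a b c, f (o1 a b c) = o2 (f a) (f b) (f c).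

(* Choosing a zero object 0, every heap becomes a group with x * y := [x, 0, y]
   and x^-1 := [0, x, 0], and then [x, y, z] = x * y^-1 * z.  In the Grothendieck
   heap the pushout of A <- 0 -> B (with the mono 0 -> A) is the biproduct, so
   [A, 0, B] = A ⊕ B = B ⊕ A: the generators commute, hence the group is abelian.
   The relations of the split Grothendieck group therefore hold there, so
   X |-> X extends to a group morphism, which is a heap morphism for
   a - b + c and is onto because its image contains every generator. *)

From Pilot Require Import Defs.
From mathcomp Require Import all_boot all_algebra.
From Stdlib Require Import FunctionalExtensionality PropExtensionality ProofIrrelevance ClassicalEpsilon.
Import GRing.Theory Defs.

Set Implicit Arguments.
Unset Strict Implicit.
Unset Printing Implicit Defensive.
Local Open Scope ring_scope.

Section HeapGroup.
Variables (T : Type) (op : T -> T -> T -> T).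
Hypothesis opA : forall a b c d e, op a b (op c d e) = op (op a b c) d e.
Hypothesis op_cancl : forall x y, op x x y = y.
Hypothesis op_cancr : forall x y, op y x x = y.
Variable e : T.

Definition heap_mul x y := op x e y.
Definition heap_inv x := op e x e.

Lemma heap_mulA x y z : heap_mul x (heap_mul y z) = heap_mul (heap_mul x y) z.
Proof. exact: opA. Qed.

Lemma heap_mul1l x : heap_mul e x = x. Proof. exact: op_cancl. Qed.
Lemma heap_mul1r x : heap_mul x e = x. Proof. exact: op_cancr. Qed.

Lemma heap_mulVl x : heap_mul (heap_inv x) x = e.
Proof. by rewrite /heap_mul /heap_inv -opA op_cancl op_cancr. Qed.

Lemma heap_mulVr x : heap_mul x (heap_inv x) = e.
Proof. by rewrite /heap_mul /heap_inv opA op_cancr op_cancl. Qed.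

Lemma heap_opE a b c : op a b c = heap_mul (heap_mul a (heap_inv b)) c.
Proof. by rewrite /heap_mul /heap_inv opA op_cancr -opA op_cancl. Qed.

Definition heap_commute x y := heap_mul x y = heap_mul y x.

Lemma heap_commute_inv x y : heap_commute x y -> heap_commute x (heap_inv y).
Proof.
move=> xy; rewrite /heap_commute.
transitivity (heap_mul (heap_inv y) (heap_mul (heap_mul y x) (heap_inv y))).
  by rewrite -heap_mulA heap_mulA heap_mulVl heap_mul1l.
by rewrite -xy -heap_mulA heap_mulVr heap_mul1r.
Qed.

Lemma heap_commute_mul x y z :
  heap_commute x y -> heap_commute x z -> heap_commute x (heap_mul y z).
Proof. by move=> xy xz; rewrite /heap_commute heap_mulA xy -heap_mulA xz heap_mulA. Qed.

Lemma heap_commute_op x a b c : heap_commute x a -> heap_commute x b ->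
  heap_commute x c -> heap_commute x (op a b c).
Proof.
move=> xa xb xc; rewrite heap_opE.
by apply: heap_commute_mul => //; apply: heap_commute_mul => //; apply: heap_commute_inv.
Qed.

End HeapGroup.

Lemma quot_ext (T : Type) (R : T -> T -> Prop) (P1 P2 : T -> Prop)
    (H1 : exists x, P1 = R x) (H2 : exists x, P2 = R x) :
  P1 = P2 -> (exist _ P1 H1 : quot R) = exist _ P2 H2.
Proof. by move=> E; subst P2; rewrite (proof_irrelevance _ H1 H2). Qed.

Section Quotient.
Variables (T : Type) (R : T -> T -> Prop).

Lemma qrepr_spec (q : quot R) : proj1_sig q = R (qrepr q).
Proof. by rewrite /qrepr; case: (constructive_indefinite_description _ _). Qed.

Lemma qcls_qrepr (q : quot R) : qcls R (qrepr q) = q.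
Proof. by case: q => P HP; apply: quot_ext; rewrite -(qrepr_spec (exist _ P HP)). Qed.

Lemma quot_ind (P : quot R -> Prop) : (forall x, P (qcls R x)) -> forall q, P q.
Proof. by move=> Pcls q; rewrite -(qcls_qrepr q). Qed.

Hypothesis R_refl : forall x, R x x.

Lemma qrepr_qcls x : R x (qrepr (qcls R x)).
Proof. by have /= -> := qrepr_spec (qcls R x). Qed.

Hypothesis R_sym : forall x y, R x y -> R y x.
Hypothesis R_trans : forall x y z, R x y -> R y z -> R x z.

Lemma eq_qcls x y : R x y -> qcls R x = qcls R y.
Proof.
move=> xy; apply: quot_ext; apply: functional_extensionality => z.
by apply: propositional_extensionality; split; [apply: R_trans (R_sym xy) | apply: R_trans xy].
Qed.

End Quotient.

Section Biproducts.
Variable C : preadditive.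

Lemma comp_zero_r (A B D : Obj C) (h : Hom B D) : comp h (0 : Hom A B) = 0.
Proof.
have := comp_addr h (0 : Hom A B) 0; rewrite addr0.
by move/(congr1 (fun f => f - comp h 0)); rewrite subrr addrK.
Qed.

Lemma is_biproduct_sym (A B S : Obj C) : is_biproduct A B S -> is_biproduct B A S.
Proof.
case=> i1 [i2 [p1 [p2 [H11 H22 H21 H12 Hid]]]].
by exists i2, i1, p2, p1; split; rewrite // addrC.
Qed.

Lemma biproduct_pushout (Y A B S : Obj C) : is_biproduct A B S ->
  exists (i1 : Hom A S) (i2 : Hom B S), is_pushout (0 : Hom Y A) (0 : Hom Y B) i1 i2.
Proof.
case=> i1 [i2 [p1 [p2 [H11 H22 H21 H12 Hid]]]]; exists i1, i2.
split=> [|Q a b _]; first by rewrite !comp_zero_r.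
exists (comp a p1 + comp b p2); split.
- by rewrite comp_addl -!comp_assoc H11 H21 comp_id_r comp_zero_r addr0.
- by rewrite comp_addl -!comp_assoc H12 H22 comp_id_r comp_zero_r add0r.
- by move=> h ha hb; rewrite -[h]comp_id_r -Hid comp_addr !comp_assoc ha hb.
Qed.

Lemma mono_from_zero_object (Z A : Obj C) (f : Hom Z A) : is_zero_object Z -> mono f.
Proof. by move=> [_ Z_terminal] W h k _; rewrite (Z_terminal _ h) (Z_terminal _ k). Qed.

Lemma hcong_biproduct (Z A B S : Obj C) : is_zero_object Z -> is_biproduct A B S ->
  hcong (hop (hvar A) (hvar Z) (hvar B)) (hvar S).
Proof.
move=> Z0 /(biproduct_pushout Z) [i1 [i2 push]].
by apply: (hc_pushout push); left; apply: mono_from_zero_object.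
Qed.

End Biproducts.

Section GrothendieckHeap.
Variable C : preadditive.

Let eq_hcls := eq_qcls (@hc_sym C) (@hc_trans C).

Lemma heap_op_qcls a b c :
  heap_op (qcls _ a) (qcls _ b) (qcls _ c) = qcls (@hcong C) (hop a b c).
Proof. by apply: eq_hcls; apply: hc_op; apply: hc_sym; exact: (qrepr_qcls (@hc_refl C)). Qed.

Lemma K0heap_ind (P : K0heap C -> Prop) :
    (forall X, P (clsH X)) ->
    (forall a b c, P a -> P b -> P c -> P (heap_op a b c)) ->
  forall q, P q.
Proof.
move=> Pcls Pop; apply: quot_ind; elim=> [X | a Pa b Pb c Pc]; first exact: Pcls.
by rewrite -heap_op_qcls; apply: Pop.
Qed.

Lemma heap_opA (a b c d e : K0heap C) :
  heap_op a b (heap_op c d e) = heap_op (heap_op a b c) d e.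
Proof.
move: a b c d e; do 5 apply: quot_ind => ?.
by rewrite !heap_op_qcls; apply: eq_hcls; apply: hc_assoc.
Qed.

Lemma heap_op_cancl (x y : K0heap C) : heap_op x x y = y.
Proof.
move: x y; do 2 apply: quot_ind => ?.
by rewrite !heap_op_qcls; apply: eq_hcls; apply: hc_cancl.
Qed.

Lemma heap_op_cancr (x y : K0heap C) : heap_op y x x = y.
Proof.
move: x y; do 2 apply: quot_ind => ?.
by rewrite !heap_op_qcls; apply: eq_hcls; apply: hc_cancr.
Qed.

Variable Z : Obj C.
Hypothesis Z0 : is_zero_object Z.
Hypothesis biproducts : forall A B : Obj C, exists S, is_biproduct A B S.

Local Notation mulH := (heap_mul (@heap_op C) (clsH Z)).
Local Notation invH := (heap_inv (@heap_op C) (clsH Z)).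
Local Notation commuteH := (heap_commute (@heap_op C) (clsH Z)).
Local Notation commute_op := (heap_commute_op heap_opA heap_op_cancl heap_op_cancr).

Lemma mulH_biproduct (A B S : Obj C) :
  is_biproduct A B S -> mulH (clsH A) (clsH B) = clsH S.
Proof.
move=> AB; rewrite /heap_mul /clsH heap_op_qcls.
by apply: eq_hcls; apply: hcong_biproduct.
Qed.

Lemma clsH_central (A : Obj C) q : commuteH (clsH A) q.
Proof.
elim/K0heap_ind: q => [B | a b c]; last exact: commute_op.
have [S AB] := biproducts A B.
by rewrite /heap_commute (mulH_biproduct AB) (mulH_biproduct (is_biproduct_sym AB)).
Qed.

Lemma mulHC p q : commuteH q p.
Proof.
elim/K0heap_ind: p => [A | a b c]; last exact: commute_op.
exact/esym/clsH_central.
Qed.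

Fixpoint gterm_eval (t : gterm C) : K0heap C :=
  match t with
  | gvar X => clsH X
  | gzero => clsH Z
  | gadd x y => mulH (gterm_eval x) (gterm_eval y)
  | gneg x => invH (gterm_eval x)
  end.

Lemma gterm_eval_gcong x y : gcong x y -> gterm_eval x = gterm_eval y.
Proof.
elim=> /=.
- by [].
- by move=> ? ? _ ->.
- by move=> ? ? ? _ -> _ ->.
- by move=> ? ? ? ? _ -> _ ->.
- by move=> ? ? _ ->.
- by move=> *; apply: (heap_mulA heap_opA).
- by move=> *; apply: mulHC.
- by move=> *; apply: (heap_mul1l heap_op_cancl).
- by move=> *; apply: (heap_mulVl heap_opA heap_op_cancl heap_op_cancr).
- by move=> X Y XY; apply: eq_hcls; apply: hc_iso.
- by move=> A B S AB; rewrite (mulH_biproduct AB).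
Qed.

Definition K0sum_to_heap (q : K0sum C) : K0heap C := gterm_eval (qrepr q).

Lemma K0sum_to_heap_qcls t : K0sum_to_heap (qcls _ t) = gterm_eval t.
Proof. by apply: gterm_eval_gcong; apply: gc_sym; exact: (qrepr_qcls (@gc_refl C)). Qed.

Fixpoint gterm_of_hterm (t : hterm C) : gterm C :=
  match t with
  | hvar X => gvar X
  | hop a b c => gadd (gadd (gterm_of_hterm a) (gneg (gterm_of_hterm b))) (gterm_of_hterm c)
  end.

Lemma gterm_eval_of_hterm t : gterm_eval (gterm_of_hterm t) = qcls _ t.
Proof.
elim: t => [X | a IHa b IHb c IHc] //=.
by rewrite IHa IHb IHc -(heap_opE heap_opA heap_op_cancl heap_op_cancr) heap_op_qcls.
Qed.

End GrothendieckHeap.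

Theorem theorem2p8 (C : preadditive) (HC : additive C) :
  exists f : K0sum C -> K0heap C,
    [/\ heap_morphism (@sum_heap_op C) (@heap_op C) f,
        (forall y : K0heap C, exists x : K0sum C, f x = y) &
        (forall X : Obj C, f (clsS X) = clsH X)].
Proof.
case: HC => [[Z Z0] biproducts].
have evalE := K0sum_to_heap_qcls Z0 biproducts.
exists (K0sum_to_heap Z); split.
- move=> a b c; rewrite /sum_heap_op evalE /=.
  by rewrite -(heap_opE (@heap_opA C) (@heap_op_cancl C) (@heap_op_cancr C)).
- move=> y; exists (qcls _ (gterm_of_hterm (qrepr y))).
  by rewrite evalE gterm_eval_of_hterm qcls_qrepr.
- by move=> X; rewrite /clsS evalE.
Qed.
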